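(* Let $X$ be a first countable, connected, locally path connected space, $n\in\mathbb{N}$, and let $A_1,\dots,A_n$ be pairwise disjoint, path connected, closed subsets of $X$ such that $X/(A_1,\dots,A_n)$ is semi-locally simply connected. Let $p:X\to X/(A_1,\dots,A_n)$ be the quotient map. Then for every $a\in\bigcup_{i=1}^nA_i$, with $*=p(a)$, the induced homomorphism $p_*:\pi_1(X,a)\to\pi_1(X/(A_1,\dots,A_n),* )$ is surjective.
   Context: $X/(A_1,\dots,A_n)$ denotes the quotient space obtained by collapsing each $A_i$ to a point, with quotient map $p$. A space $Y$ is semi-locally simply connected if every $y\in Y$ has an open neighborhood $U$ such that every loop in $U$ based at $y$ is nullhomotopic in $Y$. *)

From Stdlib Require Import Reals Lra.
Open Scope R_scope.

Record Top := {
  carrier :> Type;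
  isOpen : (carrier -> Prop) -> Prop;
  open_full : isOpen (fun _ => True);
  open_inter : forall U V, isOpen U -> isOpen V -> isOpen (fun x => U x /\ V x);
  open_union : forall (J : Type) (G : J -> carrier -> Prop),
      (forall j, isOpen (G j)) -> isOpen (fun x => exists j, G j x)
}.
Arguments isOpen {t} _.

Definition isClosed {X : Top} (A : X -> Prop) : Prop :=
  isOpen (fun x => ~ A x).

Definition I := { t : R | 0 <= t <= 1 }.
Definition I0 : I := exist _ 0 (conj (Rle_refl 0) Rle_0_1).
Definition I1 : I := exist _ 1 (conj Rle_0_1 (Rle_refl 1)).

Definition I_open (V : I -> Prop) : Prop :=
  forall t, V t -> exists eps, eps > 0 /\
    forall s : I, Rabs (proj1_sig s - proj1_sig t) < eps -> V s.

Definition I2_open (V : I * I -> Prop) : Prop :=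
  forall p, V p -> exists eps, eps > 0 /\
    forall q : I * I,
      Rabs (proj1_sig (fst q) - proj1_sig (fst p)) < eps ->
      Rabs (proj1_sig (snd q) - proj1_sig (snd p)) < eps -> V q.

Definition contI {X : Top} (f : I -> X) : Prop :=
  forall U, isOpen U -> I_open (fun t => U (f t)).
Definition contI2 {X : Top} (H : I * I -> X) : Prop :=
  forall U, isOpen U -> I2_open (fun p => U (H p)).

Definition path_homotopic {X : Top} (f g : I -> X) : Prop :=
  exists H : I * I -> X, contI2 H /\
    (forall s, H (s, I0) = f s) /\ (forall s, H (s, I1) = g s) /\
    (forall t, H (I0, t) = f I0) /\ (forall t, H (I1, t) = f I1).

Definition is_loop {X : Top} (x : X) (f : I -> X) : Prop :=
  contI f /\ f I0 = x /\ f I1 = x.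

Definition connected (X : Top) : Prop :=
  ~ exists U V : X -> Prop, isOpen U /\ isOpen V /\
      (exists x, U x) /\ (exists x, V x) /\
      (forall x, U x \/ V x) /\ (forall x, ~ (U x /\ V x)).

Definition path_connected_set {X : Top} (A : X -> Prop) : Prop :=
  forall x y, A x -> A y ->
    exists f : I -> X, contI f /\ f I0 = x /\ f I1 = y /\ forall t, A (f t).

Definition locally_path_connected (X : Top) : Prop :=
  forall (x : X) (U : X -> Prop), isOpen U -> U x ->
    exists V : X -> Prop, isOpen V /\ V x /\ (forall y, V y -> U y) /\
      path_connected_set V.

Definition first_countable (X : Top) : Prop :=
  forall x : X, exists B : nat -> X -> Prop,
    (forall k, isOpen (B k) /\ B k x) /\
    (forall U, isOpen U -> U x -> exists k, forall y, B k y -> U y).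

Definition semi_locally_simply_connected (Y : Top) : Prop :=
  forall y : Y, exists U : Y -> Prop, isOpen U /\ U y /\
    forall f : I -> Y, is_loop y f -> (forall t, U (f t)) ->
      path_homotopic f (fun _ => y).

(** The quotient X/(A_0,...,A_{n-1}) collapsing each A_i (i < n) to a point. *)
Section Quotient.
Variables (X : Top) (n : nat) (A : nat -> X -> Prop).

Definition qrel (x y : X) : Prop :=
  x = y \/ exists i, (i < n)%nat /\ A i x /\ A i y.

Definition qcarrier := { S : X -> Prop | exists x, S = qrel x }.

Definition qmap (x : X) : qcarrier := exist _ (qrel x) (ex_intro _ x eq_refl).

Definition qopen (U : qcarrier -> Prop) : Prop := isOpen (fun x => U (qmap x)).

Lemma qopen_full : qopen (fun _ => True).
Proof. exact (open_full X). Qed.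
Lemma qopen_inter : forall U V, qopen U -> qopen V -> qopen (fun x => U x /\ V x).
Proof. intros U V HU HV; exact (open_inter X _ _ HU HV). Qed.
Lemma qopen_union : forall (J : Type) (G : J -> qcarrier -> Prop),
    (forall j, qopen (G j)) -> qopen (fun x => exists j, G j x).
Proof. intros J G HG; exact (open_union X J (fun j x => G j (qmap x)) HG). Qed.

Definition quotient : Top :=
  {| carrier := qcarrier; isOpen := qopen;
     open_full := qopen_full; open_inter := qopen_inter;
     open_union := qopen_union |}.

Definition qp : X -> quotient := qmap.
End Quotient.

(* Let g be a loop in the quotient at p(a).  A point x of X "reaches" y
   through U if a path from x to the fiber over y stays in the preimage of
   U.  Since the collapsed sets are path connected, fibers are path
   connected, so the points reaching y through U form a saturated set, any
   two of which are joined by a path in the preimage of U; by local path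
   connectedness this set is open, hence its image is an open neighbourhood
   of y.  If moreover loops at y in U are null (semi-local simple
   connectivity), a path in X between points over g(c1) and g(c2) projects
   to a path homotopic to g on [c1, c2], as soon as g stays in that
   neighbourhood on [c1, c2] and y is g(c1) or g(c2).  A continuation
   argument along [0, 1] (supremum of the parameters up to which g lifts up
   to homotopy) then lifts the whole loop. *)

From Stdlib Require Import Reals Lra ProofIrrelevance FunctionalExtensionality PropExtensionality Classical.
Open Scope R_scope.

(* Real parameters are moved into [I] by clamping them to [0,1]; every
   reparametrization below is written as [mkI] of a real expression. *)
Definition clamp (r : R) : R := Rmax 0 (Rmin r 1).

Lemma clamp_in r : 0 <= clamp r <= 1.
Proof. unfold clamp, Rmax, Rmin. repeat destruct Rle_dec; lra. Qed.

Definition mkI (r : R) : I := exist _ (clamp r) (clamp_in r).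
Definition vI (s : I) : R := proj1_sig s.

Lemma vI_in (s : I) : 0 <= vI s <= 1.
Proof. exact (proj2_sig s). Qed.

Lemma clamp_id r : 0 <= r <= 1 -> clamp r = r.
Proof. unfold clamp, Rmax, Rmin. intros. repeat destruct Rle_dec; lra. Qed.

Lemma clamp_le0 r : r <= 0 -> clamp r = 0.
Proof. unfold clamp, Rmax, Rmin. intros. repeat destruct Rle_dec; lra. Qed.

Lemma clamp_ge1 r : 1 <= r -> clamp r = 1.
Proof. unfold clamp, Rmax, Rmin. intros. repeat destruct Rle_dec; lra. Qed.

Lemma clamp_lip a b : Rabs (clamp a - clamp b) <= Rabs (a - b).
Proof.
  unfold clamp, Rmax, Rmin. repeat destruct Rle_dec;
  unfold Rabs; repeat destruct Rcase_abs; lra.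
Qed.

Lemma I_eq (s t : I) : vI s = vI t -> s = t.
Proof.
  destruct s, t; unfold vI; simpl; intros; subst; f_equal; apply proof_irrelevance.
Qed.

Lemma vI_mkI r : vI (mkI r) = clamp r.
Proof. reflexivity. Qed.

Lemma mkI_val s : mkI (vI s) = s.
Proof. apply I_eq. rewrite vI_mkI. apply clamp_id, vI_in. Qed.

(* Used as [rewrite (mkI_eq e e') by ring] to normalize parameters. *)
Lemma mkI_eq r r' : r = r' -> mkI r = mkI r'.
Proof. intros; subst; reflexivity. Qed.

Lemma mkI_0 : mkI 0 = I0.
Proof. apply I_eq. rewrite vI_mkI. apply clamp_id; simpl; lra. Qed.

Lemma mkI_1 : mkI 1 = I1.
Proof. apply I_eq. rewrite vI_mkI. apply clamp_id; simpl; lra. Qed.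

Lemma vI0 : vI I0 = 0. Proof. reflexivity. Qed.
Lemma vI1 : vI I1 = 1. Proof. reflexivity. Qed.

(* Lipschitz real functions on the square [I * I], with the l1 distance.
   They are the reparametrizations used to build paths and homotopies;
   a function of the first coordinate alone plays the role of a
   Lipschitz function on [I]. *)
Definition sP (p : I * I) : R := vI (fst p).
Definition tP (p : I * I) : R := vI (snd p).

Definition lip2 (F : I * I -> R) : Prop := exists L, 0 < L /\
  forall p q, Rabs (F q - F p) <= L * (Rabs (sP q - sP p) + Rabs (tP q - tP p)).

Lemma lip2_const c : lip2 (fun _ => c).
Proof.
  exists 1; split; [lra|]. intros. replace (c - c) with 0 by ring. rewrite Rabs_R0.
  pose proof (Rabs_pos (sP q - sP p)); pose proof (Rabs_pos (tP q - tP p)); lra.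
Qed.

Lemma lip2_s : lip2 sP.
Proof. exists 1; split; [lra|]. intros. pose proof (Rabs_pos (tP q - tP p)); lra. Qed.

Lemma lip2_t : lip2 tP.
Proof. exists 1; split; [lra|]. intros. pose proof (Rabs_pos (sP q - sP p)); lra. Qed.

Lemma lip2_plus F G : lip2 F -> lip2 G -> lip2 (fun p => F p + G p).
Proof.
  intros [L1 [H1 E1]] [L2 [H2 E2]]. exists (L1 + L2); split; [lra|]. intros p q.
  specialize (E1 p q); specialize (E2 p q).
  replace (F q + G q - (F p + G p)) with ((F q - F p) + (G q - G p)) by ring.
  eapply Rle_trans; [apply Rabs_triang|]. lra.
Qed.

Lemma lip2_scal c F : lip2 F -> lip2 (fun p => c * F p).
Proof.
  intros [L [H E]]. exists (L * (Rabs c + 1)); split.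
  { pose proof (Rabs_pos c). nra. }
  intros p q. replace (c * F q - c * F p) with (c * (F q - F p)) by ring.
  rewrite Rabs_mult. specialize (E p q). pose proof (Rabs_pos c).
  pose proof (Rabs_pos (sP q - sP p)); pose proof (Rabs_pos (tP q - tP p)).
  pose proof (Rabs_pos (F q - F p)). nra.
Qed.

Lemma lip2_opp F : lip2 F -> lip2 (fun p => - F p).
Proof.
  intros HF. replace (fun p => - F p) with (fun p => -1 * F p)
    by (apply functional_extensionality; intros; ring).
  apply lip2_scal; auto.
Qed.

Lemma lip2_clamp F : lip2 F -> lip2 (fun p => clamp (F p)).
Proof.
  intros [L [H E]]. exists L; split; auto. intros p q.
  eapply Rle_trans; [apply clamp_lip|]. apply E.
Qed.

Lemma lip2_bounded F : lip2 F -> exists B, forall p, Rabs (F p) <= B.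
Proof.
  intros [L [H E]]. exists (Rabs (F (I0, I0)) + 2 * L). intros p.
  specialize (E (I0, I0) p). pose proof (vI_in (fst p)); pose proof (vI_in (snd p)).
  unfold sP, tP in E; simpl in E. change (vI I0) with 0 in E.
  rewrite (Rabs_right (vI (fst p) - 0)) in E by lra.
  rewrite (Rabs_right (vI (snd p) - 0)) in E by lra.
  replace (F p) with (F (I0, I0) + (F p - F (I0, I0))) by ring.
  eapply Rle_trans; [apply Rabs_triang|]. nra.
Qed.

Lemma lip2_mult F G : lip2 F -> lip2 G -> lip2 (fun p => F p * G p).
Proof.
  intros HF HG.
  destruct (lip2_bounded _ HF) as [B1 EB1]. destruct (lip2_bounded _ HG) as [B2 EB2].
  destruct HF as [L1 [H1 E1]], HG as [L2 [H2 E2]].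
  assert (0 <= B1) by (specialize (EB1 (I0,I0)); pose proof (Rabs_pos (F (I0,I0))); lra).
  assert (0 <= B2) by (specialize (EB2 (I0,I0)); pose proof (Rabs_pos (G (I0,I0))); lra).
  exists (B1 * L2 + B2 * L1 + 1); split; [nra|]. intros p q.
  replace (F q * G q - F p * G p) with (F q * (G q - G p) + G p * (F q - F p)) by ring.
  eapply Rle_trans; [apply Rabs_triang|]. rewrite !Rabs_mult.
  specialize (E1 p q); specialize (E2 p q). specialize (EB1 q); specialize (EB2 p).
  set (d := Rabs (sP q - sP p) + Rabs (tP q - tP p)) in *.
  assert (0 <= d) by (unfold d; pose proof (Rabs_pos (sP q - sP p));
                      pose proof (Rabs_pos (tP q - tP p)); lra).
  pose proof (Rabs_pos (F q - F p)); pose proof (Rabs_pos (G q - G p)).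
  pose proof (Rabs_pos (F q)); pose proof (Rabs_pos (G p)).
  assert (Rabs (F q) * Rabs (G q - G p) <= B1 * (L2 * d)) by (apply Rmult_le_compat; lra).
  assert (Rabs (G p) * Rabs (F q - F p) <= B2 * (L1 * d)) by (apply Rmult_le_compat; lra).
  nra.
Qed.

Ltac lipauto := repeat first [ apply lip2_const | apply lip2_s | apply lip2_t
  | apply lip2_plus | apply lip2_opp | apply lip2_mult | apply lip2_scal
  | apply lip2_clamp ].

Lemma cont2_fst {X : Top} (h : I -> X) : contI h -> contI2 (fun p => h (fst p)).
Proof.
  intros Hh U HU p Hp. destruct (Hh U HU (fst p) Hp) as [e [He E]].
  exists e; split; auto.
Qed.

Lemma cont_of_cont2_fst {X : Top} (h : I -> X) : contI2 (fun p => h (fst p)) -> contI h.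
Proof.
  intros Hh U HU t Ht. destruct (Hh U HU (t, I0) Ht) as [e [He E]].
  exists e; split; auto. intros s Hs. apply (E (s, I0)); simpl; auto.
  rewrite Rminus_diag, Rabs_R0; lra.
Qed.

(* Arithmetic behind the choice of modulus in [cont2_reparam]. *)
Lemma lip_small L M a b eps : 0 < L <= M -> 0 <= a -> 0 <= b ->
  a < eps / (2 * M) -> b < eps / (2 * M) -> L * (a + b) < eps.
Proof.
  intros HL Ha Hb Ha' Hb'.
  assert (M * (eps / (2 * M)) = eps / 2) by (field; lra).
  assert (M * a < M * (eps / (2 * M))) by (apply Rmult_lt_compat_l; lra).
  assert (M * b < M * (eps / (2 * M))) by (apply Rmult_lt_compat_l; lra).
  nra.
Qed.

Lemma cont2_reparam {X : Top} (H : I * I -> X) F1 F2 :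
  contI2 H -> lip2 F1 -> lip2 F2 -> contI2 (fun p => H (mkI (F1 p), mkI (F2 p))).
Proof.
  intros HH [L1 [P1 E1]] [L2 [P2 E2]] U HU p Hp.
  destruct (HH U HU _ Hp) as [eps [Heps Heq]].
  exists (eps / (2 * (L1 + L2))). split; [apply Rdiv_lt_0_compat; lra|].
  intros q Hs Ht. unfold sP, tP, vI in *.
  pose proof (Rabs_pos (proj1_sig (fst q) - proj1_sig (fst p))).
  pose proof (Rabs_pos (proj1_sig (snd q) - proj1_sig (snd p))).
  apply Heq; cbn [fst snd proj1_sig mkI];
    (eapply Rle_lt_trans; [apply clamp_lip|]);
    [eapply Rle_lt_trans; [apply E1|] | eapply Rle_lt_trans; [apply E2|]];
    apply (lip_small _ (L1 + L2)); auto; lra.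
Qed.

Lemma cont2_path {X : Top} (h : I -> X) F :
  contI h -> lip2 F -> contI2 (fun p => h (mkI (F p))).
Proof.
  intros Hh HF.
  apply (cont2_reparam (fun p => h (fst p)) F (fun _ => 0)); auto using cont2_fst, lip2_const.
Qed.

Lemma cont_reparam {X : Top} (h : I -> X) (F : I -> R) :
  contI h -> lip2 (fun p => F (fst p)) -> contI (fun s => h (mkI (F s))).
Proof.
  intros Hh HF. apply cont_of_cont2_fst. exact (cont2_path h _ Hh HF).
Qed.

Lemma cont2_paste {X : Top} (pi : I * I -> R) (F G : I * I -> X) :
  (forall p q e, Rabs (sP q - sP p) < e -> Rabs (tP q - tP p) < e -> Rabs (pi q - pi p) < e) ->
  contI2 F -> contI2 G -> (forall p, pi p = 1/2 -> F p = G p) ->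
  contI2 (fun p => if Rle_dec (pi p) (1/2) then F p else G p).
Proof.
  intros Hpi HF HG Hag U HU t Ht.
  assert (Near : forall e s, Rabs (sP s - sP t) < e -> Rabs (tP s - tP t) < e ->
                   pi t - e < pi s < pi t + e)
    by (intros e s H1 H2; specialize (Hpi t s e H1 H2); apply Rabs_def2 in Hpi; lra).
  destruct (Rtotal_order (pi t) (1/2)) as [Hlt|[Heq|Hgt]].
  - destruct (Rle_dec (pi t) (1/2)); [|lra].
    destruct (HF U HU t Ht) as [e [He E]].
    exists (Rmin e (1/2 - pi t)). split; [apply Rmin_pos; lra|].
    intros s Hs1 Hs2. pose proof (Rmin_l e (1/2 - pi t)); pose proof (Rmin_r e (1/2 - pi t)).
    pose proof (Near _ s Hs1 Hs2).
    destruct (Rle_dec (pi s) (1/2)); [apply E; lra | lra].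
  - destruct (Rle_dec (pi t) (1/2)); [|lra].
    assert (Ht' : U (G t)) by (rewrite <- Hag; auto).
    destruct (HF U HU t Ht) as [e [He E]]. destruct (HG U HU t Ht') as [e' [He' E']].
    exists (Rmin e e'). split; [apply Rmin_pos; lra|].
    intros s Hs1 Hs2. pose proof (Rmin_l e e'); pose proof (Rmin_r e e').
    destruct (Rle_dec (pi s) (1/2)); [apply E | apply E']; lra.
  - destruct (Rle_dec (pi t) (1/2)); [lra|].
    destruct (HG U HU t Ht) as [e [He E]].
    exists (Rmin e (pi t - 1/2)). split; [apply Rmin_pos; lra|].
    intros s Hs1 Hs2. pose proof (Rmin_l e (pi t - 1/2)); pose proof (Rmin_r e (pi t - 1/2)).
    pose proof (Near _ s Hs1 Hs2).
    destruct (Rle_dec (pi s) (1/2)); [lra | apply E; lra].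
Qed.

Definition concat {X : Top} (f g : I -> X) (s : I) : X :=
  if Rle_dec (vI s) (1/2) then f (mkI (0 + 2 * vI s)) else g (mkI (-1 + 2 * vI s)).

Definition rev {X : Top} (f : I -> X) (s : I) : X := f (mkI (1 + -1 * vI s)).

Definition restrict {X : Top} (g : I -> X) (c1 c2 : R) (s : I) : X :=
  g (mkI (c1 + (c2 - c1) * vI s)).

Lemma lip2_affine_fst a b : lip2 (fun p => a + b * vI (fst p)).
Proof. lipauto. Qed.

Lemma cont_affine {X : Top} (f : I -> X) a b :
  contI f -> contI (fun s => f (mkI (a + b * vI s))).
Proof. intros Hf. apply cont_reparam; auto. apply lip2_affine_fst. Qed.

Lemma cont_concat {X : Top} (f g : I -> X) :
  contI f -> contI g -> f I1 = g I0 -> contI (concat f g).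
Proof.
  intros Hf Hg E. apply cont_of_cont2_fst. unfold concat.
  apply (cont2_paste sP); auto; try (apply cont2_path; auto; apply lip2_affine_fst).
  intros p Hp. unfold sP in Hp. rewrite Hp.
  rewrite (mkI_eq (0 + 2 * (1/2)) 1) by field.
  rewrite (mkI_eq (-1 + 2 * (1/2)) 0) by field.
  rewrite mkI_0, mkI_1; auto.
Qed.

Lemma concat_0 {X : Top} (f g : I -> X) : concat f g I0 = f I0.
Proof.
  unfold concat. rewrite vI0. destruct Rle_dec; [|lra].
  rewrite (mkI_eq (0 + 2 * 0) 0) by ring. rewrite mkI_0; auto.
Qed.

Lemma concat_1 {X : Top} (f g : I -> X) : concat f g I1 = g I1.
Proof.
  unfold concat. rewrite vI1. destruct Rle_dec; [lra|].
  rewrite (mkI_eq (-1 + 2 * 1) 1) by ring. rewrite mkI_1; auto.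
Qed.

Lemma concat_lo {X : Top} (f g : I -> X) r :
  0 <= r <= 1/2 -> concat f g (mkI r) = f (mkI (2 * r)).
Proof.
  intros. unfold concat. rewrite vI_mkI, clamp_id by lra. destruct Rle_dec; [|lra].
  f_equal; apply mkI_eq; ring.
Qed.

Lemma concat_hi {X : Top} (f g : I -> X) r :
  1/2 < r <= 1 -> concat f g (mkI r) = g (mkI (2 * r - 1)).
Proof.
  intros. unfold concat. rewrite vI_mkI, clamp_id by lra. destruct Rle_dec; [lra|].
  f_equal; apply mkI_eq; ring.
Qed.

Lemma concat_within {X : Top} (P : X -> Prop) (f g : I -> X) :
  (forall t, P (f t)) -> (forall t, P (g t)) -> forall t, P (concat f g t).
Proof. intros. unfold concat. destruct Rle_dec; auto. Qed.

Lemma concat_map {X Y : Top} (h : X -> Y) (f g : I -> X) :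
  (fun s => h (concat f g s)) = concat (fun s => h (f s)) (fun s => h (g s)).
Proof. apply functional_extensionality; intros s; unfold concat; destruct Rle_dec; auto. Qed.

Lemma cont_rev {X : Top} (f : I -> X) : contI f -> contI (rev f).
Proof. intros. apply cont_affine; auto. Qed.

Lemma rev_0 {X : Top} (f : I -> X) : rev f I0 = f I1.
Proof. unfold rev. rewrite vI0, (mkI_eq (1 + -1 * 0) 1) by ring. rewrite mkI_1; auto. Qed.

Lemma rev_1 {X : Top} (f : I -> X) : rev f I1 = f I0.
Proof. unfold rev. rewrite vI1, (mkI_eq (1 + -1 * 1) 0) by ring. rewrite mkI_0; auto. Qed.

Lemma rev_mk {X : Top} (f : I -> X) r : 0 <= r <= 1 -> rev f (mkI r) = f (mkI (1 - r)).
Proof. intros. unfold rev. rewrite vI_mkI, clamp_id by lra. f_equal; apply mkI_eq; ring. Qed.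

Lemma rev_rev {X : Top} (f : I -> X) : rev (rev f) = f.
Proof.
  apply functional_extensionality. intros s. unfold rev. f_equal.
  apply I_eq. rewrite !vI_mkI. pose proof (vI_in s).
  rewrite (clamp_id (1 + -1 * vI s)) by lra. rewrite clamp_id; lra.
Qed.

Lemma restrict_0 {X : Top} (g : I -> X) c1 c2 : restrict g c1 c2 I0 = g (mkI c1).
Proof. unfold restrict. f_equal. apply mkI_eq. rewrite vI0. ring. Qed.

Lemma restrict_1 {X : Top} (g : I -> X) c1 c2 : restrict g c1 c2 I1 = g (mkI c2).
Proof. unfold restrict. f_equal. apply mkI_eq. rewrite vI1. ring. Qed.

Lemma cont_restrict {X : Top} (g : I -> X) c1 c2 : contI g -> contI (restrict g c1 c2).
Proof. apply cont_affine. Qed.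

Lemma restrict_full {X : Top} (g : I -> X) : restrict g 0 1 = g.
Proof.
  apply functional_extensionality; intros s. unfold restrict.
  rewrite (mkI_eq (0 + (1 - 0) * vI s) (vI s)) by ring. apply f_equal, mkI_val.
Qed.

Lemma ph_refl {X : Top} (f : I -> X) : contI f -> path_homotopic f f.
Proof.
  intros Hf. exists (fun p => f (mkI (sP p))). split; [apply cont2_path; auto; lipauto|].
  unfold sP; cbn [fst snd]. rewrite vI0, vI1, mkI_0, mkI_1.
  repeat split; intros; rewrite ?mkI_val; auto.
Qed.

Lemma ph_trans {X : Top} (f g h : I -> X) :
  path_homotopic f g -> path_homotopic g h -> path_homotopic f h.
Proof.
  intros [H [HC [E0 [E1 [F0 F1]]]]] [K [KC [G0 [G1 [J0 J1]]]]].
  exists (fun p => if Rle_dec (tP p) (1/2) then H (mkI (sP p), mkI (0 + 2 * tP p))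
                   else K (mkI (sP p), mkI (-1 + 2 * tP p))). split.
  { apply cont2_paste; [auto | apply cont2_reparam; auto; lipauto
                       | apply cont2_reparam; auto; lipauto |].
    intros p Hp. rewrite Hp.
    rewrite (mkI_eq (0 + 2 * (1/2)) 1) by field.
    rewrite (mkI_eq (-1 + 2 * (1/2)) 0) by field. rewrite mkI_0, mkI_1, E1, G0; auto. }
  unfold sP, tP; cbn [fst snd]. rewrite vI0, vI1.
  assert (g I0 = f I0) by (rewrite <- E1, F0; auto).
  assert (g I1 = f I1) by (rewrite <- E1, F1; auto).
  repeat split; intros.
  - destruct Rle_dec; [|lra].
    rewrite (mkI_eq (0 + 2 * 0) 0) by ring. rewrite mkI_0, mkI_val; auto.
  - destruct Rle_dec; [lra|].
    rewrite (mkI_eq (-1 + 2 * 1) 1) by ring. rewrite mkI_1, mkI_val; auto.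
  - destruct Rle_dec; rewrite mkI_0; [auto | rewrite J0; auto].
  - destruct Rle_dec; rewrite mkI_1; [auto | rewrite J1; auto].
Qed.

Lemma ph_concat {X : Top} (f1 g1 f2 g2 : I -> X) :
  path_homotopic f1 g1 -> path_homotopic f2 g2 -> f1 I1 = f2 I0 ->
  path_homotopic (concat f1 f2) (concat g1 g2).
Proof.
  intros [H [HC [E0 [E1 [F0 F1]]]]] [K [KC [G0 [G1 [J0 J1]]]]] Hm.
  exists (fun p => if Rle_dec (sP p) (1/2) then H (mkI (0 + 2 * sP p), mkI (tP p))
                   else K (mkI (-1 + 2 * sP p), mkI (tP p))). split.
  { apply cont2_paste; [auto | apply cont2_reparam; auto; lipauto
                       | apply cont2_reparam; auto; lipauto |].
    intros p Hp. rewrite Hp.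
    rewrite (mkI_eq (0 + 2 * (1/2)) 1) by field.
    rewrite (mkI_eq (-1 + 2 * (1/2)) 0) by field. rewrite mkI_0, mkI_1, F1, J0; auto. }
  unfold sP, tP, concat; cbn [fst snd]. rewrite vI0, vI1, ?mkI_0, ?mkI_1.
  repeat split; intros.
  - destruct Rle_dec; auto.
  - destruct Rle_dec; auto.
  - destruct Rle_dec; [|lra]. rewrite (mkI_eq (0 + 2 * 0) 0) by ring.
    rewrite mkI_0, mkI_val, F0; auto.
  - destruct Rle_dec; [lra|]. rewrite (mkI_eq (-1 + 2 * 1) 1) by ring.
    rewrite mkI_1, mkI_val, J1; auto.
Qed.

Lemma ph_rev {X : Top} (f g : I -> X) : path_homotopic f g -> path_homotopic (rev f) (rev g).
Proof.
  intros [H [HC [E0 [E1 [F0 F1]]]]].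
  exists (fun p => H (mkI (1 + -1 * sP p), mkI (tP p))).
  split; [apply cont2_reparam; auto; lipauto|].
  unfold sP, tP, rev; cbn [fst snd]. rewrite vI0, vI1, mkI_0, mkI_1.
  rewrite (mkI_eq (1 + -1 * 0) 1), (mkI_eq (1 + -1 * 1) 0) by ring. rewrite mkI_0, mkI_1.
  repeat split; intros; rewrite ?mkI_val; auto.
Qed.

(* Two Lipschitz reparametrizations of a path with the same endpoints
   are path homotopic (straight-line homotopy of the parameters). *)
Lemma ph_reparam {X : Top} (h : I -> X) (p0 p1 : I -> R) :
  contI h -> lip2 (fun p => p0 (fst p)) -> lip2 (fun p => p1 (fst p)) ->
  p0 I0 = p1 I0 -> p0 I1 = p1 I1 ->
  path_homotopic (fun s => h (mkI (p0 s))) (fun s => h (mkI (p1 s))).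
Proof.
  intros Hh L0 L1 E0 E1.
  exists (fun p => h (mkI ((1 - tP p) * p0 (fst p) + tP p * p1 (fst p)))).
  split; [apply cont2_path; auto; lipauto; auto|].
  unfold tP; cbn [fst snd]. rewrite vI0, vI1.
  repeat split; intros; f_equal; apply mkI_eq; try ring.
  - rewrite E0; ring.
  - rewrite E1; ring.
Qed.

Lemma ph_restrict_concat {X : Top} (g : I -> X) c1 c2 : contI g -> 0 <= c1 <= c2 ->
  path_homotopic (concat (restrict g 0 c1) (restrict g c1 c2)) (restrict g 0 c2).
Proof.
  intros Hg Hc.
  set (p1 := fun s => c1 * clamp (0 + 2 * vI s) + (c2 - c1) * clamp (-1 + 2 * vI s)).
  assert (E : concat (restrict g 0 c1) (restrict g c1 c2) = fun s => g (mkI (p1 s))).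
  { apply functional_extensionality; intros s; unfold concat, restrict, p1.
    pose proof (vI_in s).
    destruct Rle_dec; f_equal; apply mkI_eq; rewrite vI_mkI.
    - rewrite (clamp_le0 (-1 + 2 * vI s)) by lra. ring.
    - rewrite (clamp_ge1 (0 + 2 * vI s)) by lra. ring. }
  rewrite E. unfold restrict. apply ph_reparam; auto; unfold p1; try lipauto.
  - rewrite vI0, (clamp_le0 (0 + 2 * 0)), (clamp_le0 (-1 + 2 * 0)) by lra. ring.
  - rewrite vI1, (clamp_ge1 (0 + 2 * 1)), (clamp_ge1 (-1 + 2 * 1)) by lra. ring.
Qed.

(* The null-homotopy [K] is precomposed with a map of the square whose
   bottom edge runs over the first half of [K]'s bottom edge (where [K] is
   [u]), whose top edge runs backwards over its second half (where [K] is
   [rev v]), whose left edge runs over the three other sides of [K]'s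
   domain (where [K] is constantly the base point) and whose right edge
   collapses to the midpoint of [K]'s bottom edge (the common end of [u]
   and [v]). *)
Lemma ph_of_null_concat {X : Top} (y : X) (u v : I -> X) :
  u I0 = y -> v I0 = y -> u I1 = v I1 ->
  path_homotopic (concat u (rev v)) (fun _ => y) -> path_homotopic u v.
Proof.
  intros u0 v0 u1v1 [K [KC [E0 [E1 [F0 F1]]]]].
  rewrite concat_0, u0 in F0. rewrite concat_1, rev_1, v0 in F1.
  exists (fun p => K (mkI (1/2 + (1 - sP p) * (-1/2 + clamp (3 * tP p - 1))),
                    mkI ((1 - sP p) * (clamp (3 * tP p) - clamp (3 * tP p - 2))))).
  split; [apply cont2_reparam; auto; lipauto|].
  unfold sP, tP; cbn [fst snd]. rewrite vI0, vI1.
  repeat split; intros.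
  - pose proof (vI_in s).
    rewrite (clamp_le0 (3 * 0 - 1)), (clamp_le0 (3 * 0)), (clamp_le0 (3 * 0 - 2)) by lra.
    rewrite (mkI_eq ((1 - vI s) * (0 - 0)) 0) by ring. rewrite mkI_0, E0.
    rewrite concat_lo by lra. rewrite <- (mkI_val s) at 2. f_equal. apply mkI_eq; field.
  - pose proof (vI_in s).
    rewrite (clamp_ge1 (3 * 1 - 1)), (clamp_ge1 (3 * 1)), (clamp_ge1 (3 * 1 - 2)) by lra.
    rewrite (mkI_eq ((1 - vI s) * (1 - 1)) 0) by ring. rewrite mkI_0, E0.
    destruct (Req_dec (vI s) 1) as [Hs|Hs].
    + replace s with I1 by (apply I_eq; rewrite Hs; reflexivity).
      rewrite vI1, concat_lo by lra.
      rewrite (mkI_eq (2 * (1 / 2 + (1 - 1) * (-1 / 2 + 1))) 1) by field.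
      rewrite mkI_1; auto.
    + rewrite concat_hi, rev_mk by lra.
      rewrite <- (mkI_val s) at 2. f_equal. apply mkI_eq. field.
  - pose proof (vI_in t). rewrite u0.
    destruct (Rle_dec (3 * vI t - 1) 0).
    + rewrite (clamp_le0 (3 * vI t - 1)) by lra.
      rewrite (mkI_eq (1 / 2 + (1 - 0) * (-1 / 2 + 0)) 0) by field. rewrite mkI_0; auto.
    + destruct (Rle_dec (3 * vI t - 2) 0).
      * rewrite (clamp_le0 (3 * vI t - 2)), (clamp_ge1 (3 * vI t)) by lra.
        rewrite (mkI_eq ((1 - 0) * (1 - 0)) 1) by ring. rewrite mkI_1; auto.
      * rewrite (clamp_ge1 (3 * vI t - 1)) by lra.
        rewrite (mkI_eq (1 / 2 + (1 - 0) * (-1 / 2 + 1)) 1) by field. rewrite mkI_1; auto.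
  - rewrite (mkI_eq (1 / 2 + (1 - 1) * (-1 / 2 + clamp (3 * vI t - 1))) (1/2)) by ring.
    rewrite (mkI_eq ((1 - 1) * (clamp (3 * vI t) - clamp (3 * vI t - 2))) 0) by ring.
    rewrite mkI_0, E0, concat_lo by lra.
    rewrite (mkI_eq (2 * (1/2)) 1) by field. rewrite mkI_1; auto.
Qed.

Definition null_loops_in {Y : Top} (y : Y) (U : Y -> Prop) : Prop :=
  forall f, is_loop y f -> (forall t, U (f t)) -> path_homotopic f (fun _ => y).

Lemma ph_in_null_nbhd {Y : Top} (y : Y) (U : Y -> Prop) (u v : I -> Y) :
  null_loops_in y U -> contI u -> contI v -> u I0 = y -> v I0 = y -> u I1 = v I1 ->
  (forall t, U (u t)) -> (forall t, U (v t)) -> path_homotopic u v.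
Proof.
  intros HS Cu Cv u0 v0 u1v1 Uu Uv.
  apply (ph_of_null_concat y); auto. apply HS.
  - repeat split.
    + apply cont_concat; [auto | apply cont_rev; auto | rewrite rev_0; auto].
    + rewrite concat_0; auto.
    + rewrite concat_1, rev_1; auto.
  - apply concat_within; auto. intros t; unfold rev; auto.
Qed.

Lemma ph_in_null_nbhd_end {Y : Top} (y : Y) (U : Y -> Prop) (u v : I -> Y) :
  null_loops_in y U -> contI u -> contI v -> u I1 = y -> v I1 = y -> u I0 = v I0 ->
  (forall t, U (u t)) -> (forall t, U (v t)) -> path_homotopic u v.
Proof.
  intros HS Cu Cv u1 v1 u0v0 Uu Uv.
  rewrite <- (rev_rev u), <- (rev_rev v). apply ph_rev.
  apply (ph_in_null_nbhd y U); auto using cont_rev; rewrite ?rev_0, ?rev_1; auto;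
    intros t; unfold rev; auto.
Qed.

Section QuotientPaths.

Variables (X : Top) (n : nat) (A : nat -> X -> Prop).

Local Notation Q := (quotient X n A).
Local Notation p := (qp X n A).

Hypothesis disjoint :
  forall i j x, (i < n)%nat -> (j < n)%nat -> i <> j -> A i x -> A j x -> False.
Hypothesis path_conn : forall i, (i < n)%nat -> path_connected_set (A i).

Lemma qp_cont (f : I -> X) : contI f -> contI (fun s => p (f s)).
Proof. intros Hf U HU. exact (Hf (fun x => U (p x)) HU). Qed.

Lemma qp_surj (q : Q) : exists x, p x = q.
Proof.
  destruct q as [S [x HS]]. exists x. subst S. unfold qp, qmap.
  apply subset_eq_compat. reflexivity.
Qed.

Lemma qp_eq_inv (x x' : X) :
  p x = p x' -> x = x' \/ exists i, (i < n)%nat /\ A i x /\ A i x'.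
Proof.
  intros E. apply (f_equal (@proj1_sig _ _)) in E. simpl in E.
  assert (H : qrel X n A x' x') by (left; auto). rewrite <- E in H. exact H.
Qed.

Lemma qp_eq_A i (x x' : X) : (i < n)%nat -> A i x -> A i x' -> p x = p x'.
Proof.
  intros Hi Hx Hx'.
  assert (Same : forall z, (exists j, (j < n)%nat /\ A j x /\ A j z) <->
                           (exists j, (j < n)%nat /\ A j x' /\ A j z)).
  { intros z; split; intros [j [Hj [Hjx Hjz]]]; exists i; repeat split; auto;
      (destruct (Nat.eq_dec j i); [subst; auto | exfalso; eapply disjoint; eauto]). }
  unfold qp, qmap. apply subset_eq_compat.
  apply functional_extensionality; intros z; apply propositional_extensionality.
  unfold qrel. split.
  - intros [<-|H]; right; [exists i; auto | apply Same; auto].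
  - intros [<-|H]; right; [exists i; auto | apply Same; auto].
Qed.

Lemma fiber_path (x x' : X) : p x = p x' ->
  exists d : I -> X, contI d /\ d I0 = x /\ d I1 = x' /\ forall t, p (d t) = p x.
Proof.
  intros E. destruct (qp_eq_inv x x' E) as [<-|[i [Hi [Hx Hx']]]].
  - exists (fun _ => x). repeat split; auto. intros U HU t Ht. exists 1; split; [lra|auto].
  - destruct (path_conn i Hi x x' Hx Hx') as [d [Cd [d0 [d1 Hd]]]].
    exists d. repeat split; auto. intros t. eapply qp_eq_A; eauto.
Qed.

Definition reach (y : Q) (U : Q -> Prop) (x : X) : Prop :=
  exists g : I -> X, contI g /\ g I0 = x /\ p (g I1) = y /\ forall t, U (p (g t)).

Lemma reach_in (y : Q) U x : reach y U x -> U (p x).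
Proof. intros [g [_ [g0 [_ Hg]]]]. rewrite <- g0. auto. Qed.

Lemma reach_fiber (y : Q) (U : Q -> Prop) x : p x = y -> U y -> reach y U x.
Proof.
  intros E Uy. exists (fun _ => x). repeat split; auto.
  - intros V HV t Ht. exists 1; split; [lra|auto].
  - intros; rewrite E; auto.
Qed.

Lemma reach_saturated (y : Q) U x x' : reach y U x -> p x' = p x -> reach y U x'.
Proof.
  intros HC E. pose proof (reach_in _ _ _ HC) as HW.
  destruct HC as [g [Cg [g0 [g1 Hg]]]].
  destruct (fiber_path x' x E) as [d [Cd [d0 [d1 Hd]]]].
  exists (concat d g). repeat split.
  - apply cont_concat; auto; congruence.
  - rewrite concat_0; auto.
  - rewrite concat_1; auto.
  - apply (concat_within (fun z => U (p z))); auto. intros t; rewrite Hd, E; auto.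
Qed.

(* Any two points of [reach y U] are joined by a path in the preimage of [U]:
   go to the fiber over [y], cross it, and come back. *)
Lemma reach_connect (y : Q) U x1 x2 : reach y U x1 -> reach y U x2 ->
  exists g : I -> X, contI g /\ g I0 = x1 /\ g I1 = x2 /\ forall t, U (p (g t)).
Proof.
  intros [g1 [C1 [g10 [g11 Hg1]]]] [g2 [C2 [g20 [g21 Hg2]]]].
  destruct (fiber_path (g1 I1) (g2 I1)) as [d [Cd [d0 [d1 Hd]]]]; [congruence|].
  exists (concat g1 (concat d (rev g2))). repeat split.
  - apply cont_concat; auto.
    + apply cont_concat; auto. apply cont_rev; auto. rewrite rev_0; auto.
    + rewrite concat_0; auto.
  - rewrite concat_0; auto.
  - rewrite !concat_1, rev_1; auto.
  - apply (concat_within (fun z => U (p z))); auto.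
    apply (concat_within (fun z => U (p z))).
    + intros t; rewrite Hd; auto.
    + intros t; unfold rev; auto.
Qed.

Hypothesis loc_path_conn : locally_path_connected X.

(* For open [U], [reach y U] is open: it is the union of the path connected
   neighbourhoods, inside the preimage of [U], of its points. *)
Lemma reach_open (y : Q) U : isOpen U -> isOpen (reach y U).
Proof.
  intros HU.
  set (J := { xN : X * (X -> Prop) | reach y U (fst xN) /\ isOpen (snd xN) /\
             snd xN (fst xN) /\ (forall z, snd xN z -> U (p z)) /\
             path_connected_set (snd xN) }).
  assert (E : (fun x => exists j : J, snd (proj1_sig j) x) = reach y U).
  { apply functional_extensionality; intros z; apply propositional_extensionality. split.
    - intros [[[x N] [HC [HN [Nx [NU NP]]]]] Nz]. simpl in *.
      destruct (NP z x Nz Nx) as [b [Cb [b0 [b1 Hb]]]].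
      destruct HC as [g [Cg [g0 [g1 Hg]]]].
      exists (concat b g). repeat split.
      + apply cont_concat; auto; congruence.
      + rewrite concat_0; auto.
      + rewrite concat_1; auto.
      + apply (concat_within (fun z => U (p z))); auto.
    - intros HC.
      destruct (loc_path_conn z (fun w => U (p w)) HU (reach_in _ _ _ HC))
        as [N [HN [Nz [NU NP]]]].
      exists (exist _ (z, N) (conj HC (conj HN (conj Nz (conj NU NP))))). simpl. auto. }
  rewrite <- E. apply open_union. intros [[x N] HH]. simpl. apply HH.
Qed.

Definition reach_nbhd (y : Q) (U : Q -> Prop) (q : Q) : Prop :=
  forall x, p x = q -> reach y U x.

Lemma reach_nbhd_open (y : Q) U : isOpen U -> isOpen (reach_nbhd y U).
Proof.
  intros HU. simpl. unfold qopen.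
  assert (E : (fun x => reach_nbhd y U (qmap X n A x)) = reach y U).
  { apply functional_extensionality; intros z; apply propositional_extensionality. split.
    - intros H. apply H. reflexivity.
    - intros H x' E. eapply reach_saturated; eauto. }
  rewrite E. apply reach_open; auto.
Qed.

Lemma reach_nbhd_base (y : Q) (U : Q -> Prop) : U y -> reach_nbhd y U y.
Proof. intros Uy x Ex. apply reach_fiber; auto. Qed.

Definition lifts_to (a : X) (g : I -> Q) (c : R) : Prop :=
  forall x, p x = g (mkI c) -> exists f : I -> X, contI f /\ f I0 = a /\ f I1 = x /\
    path_homotopic (fun s => p (f s)) (restrict g 0 c).

Lemma lifts_start (a : X) (g : I -> Q) : g I0 = p a -> lifts_to a g 0.
Proof.
  intros g0 x Ex. rewrite mkI_0, g0 in Ex.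
  destruct (fiber_path a x (eq_sym Ex)) as [d [Cd [d0 [d1 Hd]]]].
  exists d. repeat split; auto.
  assert (E : (fun s => p (d s)) = restrict g 0 0).
  { apply functional_extensionality; intros s. unfold restrict.
    rewrite Hd, (mkI_eq (0 + (0 - 0) * vI s) 0) by ring. rewrite mkI_0; auto. }
  rewrite <- E. apply ph_refl, qp_cont; auto.
Qed.

(* Lifting along a segment [[c1, c2]] on which [g] stays in
   [reach_nbhd y U], where [y] is the value of [g] at an end of the segment
   and loops at [y] in [U] are null: a path in the preimage of [U] joining
   given points over [g c1] and [g c2] projects to a path homotopic to [g]
   on the segment, since both stay in [U] and share their end points. *)
Lemma segment_lift (g : I -> Q) (y : Q) U c1 c2 x1 x2 :
  contI g -> c1 <= c2 -> null_loops_in y U ->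
  (y = g (mkI c1) \/ y = g (mkI c2)) ->
  (forall r, c1 <= r <= c2 -> reach_nbhd y U (g (mkI r))) ->
  p x1 = g (mkI c1) -> p x2 = g (mkI c2) ->
  exists h : I -> X, contI h /\ h I0 = x1 /\ h I1 = x2 /\
    path_homotopic (fun s => p (h s)) (restrict g c1 c2).
Proof.
  intros Cg Hc HS Hy HV E1 E2.
  destruct (reach_connect y U x1 x2) as [h [Ch [h0 [h1 Hh]]]];
    [apply (HV c1); auto; lra | apply (HV c2); auto; lra |].
  exists h; repeat split; auto.
  assert (Ug : forall t, U (restrict g c1 c2 t)).
  { intros t. unfold restrict. pose proof (vI_in t).
    destruct (qp_surj (g (mkI (c1 + (c2 - c1) * vI t)))) as [z Ez]. rewrite <- Ez.
    apply (reach_in y). apply (HV (c1 + (c2 - c1) * vI t)); auto. split; nra. }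
  destruct Hy as [Hy|Hy];
    [apply (ph_in_null_nbhd y U) | apply (ph_in_null_nbhd_end y U)];
    auto using qp_cont, cont_restrict;
    rewrite ?h0, ?h1, ?restrict_0, ?restrict_1; congruence.
Qed.

Lemma lifts_extend (a : X) (g : I -> Q) (y : Q) U c1 c2 :
  contI g -> 0 <= c1 <= c2 -> null_loops_in y U ->
  (y = g (mkI c1) \/ y = g (mkI c2)) ->
  (forall r, c1 <= r <= c2 -> reach_nbhd y U (g (mkI r))) ->
  lifts_to a g c1 -> lifts_to a g c2.
Proof.
  intros Cg Hc HS Hy HV Lift1 x2 E2.
  destruct (qp_surj (g (mkI c1))) as [x1 E1].
  destruct (Lift1 x1 E1) as [f [Cf [f0 [f1 Hf]]]].
  destruct (segment_lift g y U c1 c2 x1 x2) as [h [Ch [h0 [h1 Hh]]]]; auto; try lra.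
  exists (concat f h). repeat split.
  - apply cont_concat; auto; congruence.
  - rewrite concat_0; auto.
  - rewrite concat_1; auto.
  - rewrite concat_map. eapply ph_trans.
    + apply ph_concat; eauto. rewrite f1, h0; auto.
    + apply ph_restrict_concat; auto; lra.
Qed.

Hypothesis slsc : semi_locally_simply_connected Q.

(* Near any parameter [m], lifts propagate along short segments ending at
   [m]: take a neighbourhood [U] of [g m] in which loops are null; by
   continuity [g] stays in the open set [reach_nbhd (g m) U] near [m]. *)
Lemma lifts_local (a : X) (g : I -> Q) m : contI g -> 0 <= m <= 1 ->
  exists eps, 0 < eps /\ forall c1 c2, 0 <= c1 <= c2 -> c2 <= 1 ->
    m - eps < c1 -> c2 < m + eps -> (c1 = m \/ c2 = m) ->
    lifts_to a g c1 -> lifts_to a g c2.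
Proof.
  intros Cg Hm.
  destruct (slsc (g (mkI m))) as [U [HU [Uy HS]]].
  destruct (Cg _ (reach_nbhd_open (g (mkI m)) U HU) (mkI m) (reach_nbhd_base _ _ Uy))
    as [eps [Heps Near]].
  exists eps; split; auto. intros c1 c2 Hc1 Hc2 Lo Hi Hend.
  apply (lifts_extend a g (g (mkI m)) U c1 c2); auto.
  - destruct Hend as [<-|<-]; auto.
  - intros r Hr. apply Near. change (Rabs (clamp r - clamp m) < eps).
    rewrite !clamp_id by lra. apply Rabs_def1; lra.
Qed.

End QuotientPaths.

(* Continuation on [[0, 1]]: a property that holds at 0 and that, around
   every point [m], propagates along short segments having [m] as an end
   point, holds at 1 (consider the supremum of the points where it holds). *)
Lemma continuation (P : R -> Prop) : P 0 ->
  (forall m, 0 <= m <= 1 -> exists eps, 0 < eps /\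
    forall c1 c2, 0 <= c1 <= c2 -> c2 <= 1 -> m - eps < c1 -> c2 < m + eps ->
      (c1 = m \/ c2 = m) -> P c1 -> P c2) -> P 1.
Proof.
  intros P0 Step.
  set (E := fun c => 0 <= c <= 1 /\ P c).
  destruct (completeness E) as [m [Hub Hlub]];
    [exists 1; intros c [Hc _]; lra | exists 0; split; [lra|auto] |].
  assert (m0 : 0 <= m) by (apply Hub; split; [lra|auto]).
  assert (m1 : m <= 1) by (apply Hlub; intros c [Hc _]; lra).
  destruct (Step m (conj m0 m1)) as [eps [Heps Hstep]].
  assert (Pm : P m).
  { assert (Hc : exists c, E c /\ m - eps < c).
    { apply NNPP; intros Hn. assert (m <= m - eps); [|lra].
      apply Hlub. intros c Hc. destruct (Rle_dec c (m - eps)); auto.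
      exfalso; apply Hn; exists c; split; auto; lra. }
    destruct Hc as [c [[Hc Pc] Hcm]].
    assert (c <= m) by (apply Hub; split; auto).
    apply (Hstep c m); auto; lra. }
  destruct (Req_dec m 1) as [<-|Hm]; auto.
  set (m2 := Rmin 1 (m + eps / 2)).
  assert (m2 <= 1) by apply Rmin_l. assert (m2 <= m + eps / 2) by apply Rmin_r.
  assert (m < m2) by (unfold m2; apply Rmin_glb_lt; lra).
  assert (m2 <= m) by (apply Hub; split; [lra | apply (Hstep m m2); auto; lra]).
  lra.
Qed.

Theorem corollary3p13 (X : Top) (n : nat) (A : nat -> X -> Prop) :
  first_countable X -> connected X -> locally_path_connected X ->
  (forall i j x, (i < n)%nat -> (j < n)%nat -> i <> j -> A i x -> A j x -> False) ->
  (forall i, (i < n)%nat -> path_connected_set (A i)) ->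
  (forall i, (i < n)%nat -> isClosed (A i)) ->
  semi_locally_simply_connected (quotient X n A) ->
  forall a : X, (exists i, (i < n)%nat /\ A i a) ->
  forall g : I -> quotient X n A, is_loop (qp X n A a) g ->
    exists f : I -> X, is_loop a f /\
      path_homotopic (fun t => qp X n A (f t)) g.
Proof.
  intros _ _ loc_pc disj pc _ slsc a _ g [Cg [g0 g1]].
  assert (Lift : lifts_to X n A a g 1).
  { apply continuation.
    - apply lifts_start; auto.
    - intros m Hm. apply lifts_local; auto. }
  destruct (Lift a) as [f [Cf [f0 [f1 Hf]]]]; [rewrite mkI_1; auto|].
  exists f. rewrite restrict_full in Hf. repeat split; auto.
Qed.
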